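(* Let $m\ge1$ be an integer and $\alpha>0$. (i) Let $a,\lambda\in\mathbb{C}$ with $|\lambda|<\alpha$, and define $K_\lambda f(z)=am\,e^{\lambda z^m}\int_0^ze^{-\lambda w^m}w^{m-1}f(w)\,dw$ for entire $f$. Then $K_\lambda$ is a bounded operator on $\mathcal{F}^\infty_{(\alpha,m)}$ with $\|K_\lambda\|\le\frac{|a|}{\alpha-|\lambda|}$. (ii) For $a_m\in\mathbb{C}$ and $g_m(z)=a_mz^m$, the operator $V_{g_m}f(z)=\int_0^zg_m'(w)f(w)\,dw$ is bounded on $\mathcal{F}^\infty_{(\alpha,m)}$ with $\|V_{g_m}\|\le\frac{|a_m|}{\alpha}$.
   Context: For $\alpha>0$, $m>0$, $\mathcal{F}^\infty_{(\alpha,m)}$ denotes the Banach space of entire functions $f$ with $\|f\|_{(\infty,\alpha,m)}=\sup_{r>0}e^{-\alpha r^m}\max_{|z|=r}|f(z)|<\infty$. *)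

From Stdlib Require Import Reals ClassicalEpsilon.
From Coquelicot Require Import Coquelicot.
Open Scope R_scope.

Definition Cexp (z : C) : C := (exp (Re z) * cos (Im z), exp (Re z) * sin (Im z)).

Definition entire (f : C -> C) : Prop :=
  forall z : C, @ex_derive C_AbsRing C_NormedModule f z.

(* contour integral of h along the segment [0, z]:
   int_0^z h(w) dw = z * int_0^1 h(t z) dt  (real and imaginary parts) *)
Definition seg_int (h : C -> C) (z : C) : C :=
  Cmult z (RInt (fun t => Re (h (Cmult (RtoC t) z))) 0 1,
           RInt (fun t => Im (h (Cmult (RtoC t) z))) 0 1).

Definition fock_weight (alpha : R) (m : nat) (f : C -> C) (z : C) : R :=
  exp (- alpha * (Cmod z) ^ m) * Cmod (f z).

Definition in_fock (alpha : R) (m : nat) (f : C -> C) : Prop :=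
  entire f /\ exists M : R, forall z : C, 0 < Cmod z -> fock_weight alpha m f z <= M.

(* ||f||_(infty,alpha,m) = sup_{r>0} e^{-alpha r^m} max_{|z|=r}|f z|
   = sup over z <> 0 of fock_weight (the max over each circle is attained). *)
Definition fock_norm (alpha : R) (m : nat) (f : C -> C) : R :=
  real (Lub_Rbar (fun x => exists z : C, 0 < Cmod z /\ x = fock_weight alpha m f z)).

Definition K_op (a lambda : C) (m : nat) (f : C -> C) (z : C) : C :=
  Cmult (Cmult a (RtoC (INR m)))
    (Cmult (Cexp (Cmult lambda (Cpow z m)))
       (seg_int (fun w => Cmult (Cexp (Copp (Cmult lambda (Cpow w m))))
                               (Cmult (Cpow w (m - 1)) (f w))) z)).

(* complex derivative g'(w) (the unique l with is_derive g w l, when g is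
   complex differentiable at w; an arbitrary value otherwise) *)
Definition Cderiv (g : C -> C) (w : C) : C :=
  epsilon (inhabits (RtoC 0)) (fun l : C => @is_derive C_AbsRing C_NormedModule g w l).

Definition V_op (g : C -> C) (f : C -> C) (z : C) : C :=
  seg_int (fun w => Cmult (Cderiv g w) (f w)) z.

Definition fock_bounded_by (alpha : R) (m : nat) (T : (C -> C) -> (C -> C)) (c : R) : Prop :=
  forall f : C -> C, in_fock alpha m f ->
    in_fock alpha m (T f) /\ fock_norm alpha m (T f) <= c * fock_norm alpha m f.

(* Writing [K_lambda f (z) = a m e^(lambda z^m) z int_0^1 e^(-lambda (t z)^m) (t z)^(m-1) f(t z) dt]
   and inserting [|f w| <= ||f|| e^(alpha |w|^m)] together with
   [Re (lambda z^m) (1 - t^m) <= |lambda| r^m (1 - t^m)], where [r = |z|], gives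
     e^(-alpha r^m) |K_lambda f (z)|
       <= |a| ||f|| m r^m int_0^1 t^(m-1) e^(-(alpha - |lambda|) r^m (1 - t^m)) dt
        = |a| ||f|| (1 - e^(-(alpha - |lambda|) r^m)) / (alpha - |lambda|),
   and [V_(a_m z^m)] is [K_0] with [a = a_m].  That [K_lambda f] is again entire rests on the
   segment integral [z |-> int_0^z h] being a primitive of an entire [h], which follows from
   Goursat's lemma for triangles, proved by the usual subdivision argument. *)

From Stdlib Require Import Reals Lra Lia Psatz FunctionalExtensionality ClassicalEpsilon.
From Coquelicot Require Import Coquelicot.
Open Scope R_scope.

Lemma Cexp_add (a b : C) : Cexp (Cplus a b) = Cmult (Cexp a) (Cexp b).
Proof.
  destruct a as [a1 a2], b as [b1 b2]; unfold Cexp; simpl.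
  rewrite exp_plus, cos_plus, sin_plus.
  apply injective_projections; simpl; ring.
Qed.

Lemma Cexp_0 : Cexp (RtoC 0) = RtoC 1.
Proof.
  unfold Cexp; simpl. rewrite exp_0, cos_0, sin_0.
  apply injective_projections; simpl; ring.
Qed.

Lemma Cmod_Cexp (u : C) : Cmod (Cexp u) = exp (Re u).
Proof.
  destruct u as [x y]; unfold Cexp, Cmod; simpl.
  replace (exp x * cos y * (exp x * cos y * 1) + exp x * sin y * (exp x * sin y * 1))
    with (exp x * exp x * (Rsqr (sin y) + Rsqr (cos y))) by (unfold Rsqr; ring).
  rewrite sin2_cos2, Rmult_1_r. apply sqrt_square, Rlt_le, exp_pos.
Qed.

Lemma Rabs_Im_le_Cmod (c : C) : Rabs (Im c) <= Cmod c.
Proof.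
  pose proof (Rmax_Cmod c). pose proof (Rmax_r (Rabs (fst c)) (Rabs (snd c))).
  unfold Im. lra.
Qed.

Lemma Cmod_le_Rabs_Re_Im (c : C) : Cmod c <= Rabs (Re c) + Rabs (Im c).
Proof.
  destruct c as [x y]. unfold Cmod; simpl.
  pose proof (Rabs_pos x); pose proof (Rabs_pos y).
  apply Rsqr_incr_0_var; [|lra].
  rewrite Rsqr_sqrt by nra. unfold Rsqr.
  replace (x * (x * 1) + y * (y * 1)) with (Rabs x * Rabs x + Rabs y * Rabs y)
    by (rewrite <- !Rabs_mult, !Rabs_right by nra; ring).
  nra.
Qed.

Lemma Cmod_Cminus_sym (x y : C) : Cmod (Cminus x y) = Cmod (Cminus y x).
Proof. replace (Cminus x y) with (Copp (Cminus y x)) by ring. apply Cmod_opp. Qed.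

Lemma Rabs_Cmod_sub_le (a b : C) : Rabs (Cmod a - Cmod b) <= Cmod (Cminus a b).
Proof.
  pose proof (Cmod_triangle (Cminus b a) a). pose proof (Cmod_triangle (Cminus a b) b).
  rewrite Cmod_Cminus_sym in H.
  replace (Cplus (Cminus b a) a) with b in H by ring.
  replace (Cplus (Cminus a b) b) with a in H0 by ring.
  apply Rabs_le. lra.
Qed.

Lemma Cmod_scale_half (z : C) : Cmod (Cmult z (RtoC (/2))) = Cmod z / 2.
Proof. rewrite Cmod_mult, Cmod_R, Rabs_right by lra. field. Qed.

Lemma exp_le_mono (x y : R) : x <= y -> exp x <= exp y.
Proof. intros [H| ->]; [left; apply exp_increasing, H|lra]. Qed.

Lemma MVT_abs_between (f f' : R -> R) (x : R) :
  (forall c, derivable_pt_lim f c (f' c)) ->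
  exists c, Rabs c <= Rabs x /\ Rabs (f x - f 0) = Rabs (f' c) * Rabs x.
Proof.
  intros Hf. destruct (MVT_abs f f' 0 x (fun c _ => Hf c)) as [c [Hc Hcx]].
  exists c. rewrite Rminus_0_r in Hc. split; [|exact Hc].
  destruct (Rle_dec 0 x).
  - rewrite Rmin_left, Rmax_right in Hcx by lra. rewrite !Rabs_right by lra. lra.
  - rewrite Rmin_right, Rmax_left in Hcx by lra. rewrite !Rabs_left1 by lra. lra.
Qed.

Lemma Rabs_exp_sub1_le (x : R) : Rabs x <= 1 -> Rabs (exp x - 1) <= 3 * Rabs x.
Proof.
  intros Hx. destruct (MVT_abs_between exp exp x derivable_pt_lim_exp) as [c [Hc E]].
  rewrite exp_0 in E. rewrite E. apply Rmult_le_compat_r; [apply Rabs_pos|].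
  rewrite Rabs_right by (apply Rle_ge, Rlt_le, exp_pos).
  apply Rle_trans with (exp 1); [|apply exp_le_3].
  apply exp_le_mono. apply Rabs_le_between in Hc; lra.
Qed.

Lemma Rabs_exp_taylor1_le (x : R) : Rabs x <= 1 -> Rabs (exp x - 1 - x) <= 3 * x ^ 2.
Proof.
  intros Hx.
  destruct (MVT_abs_between (fun t => exp t - t) (fun t => exp t - 1) x) as [c [Hc E]].
  { intros c. apply (derivable_pt_lim_minus exp id).
    apply derivable_pt_lim_exp. apply derivable_pt_lim_id. }
  rewrite exp_0, Rminus_0_r in E.
  replace (exp x - 1 - x) with (exp x - x - 1) by ring. rewrite E.
  pose proof (Rabs_exp_sub1_le c ltac:(lra)). pose proof (Rabs_pos c).
  rewrite <- (pow2_abs x). simpl. nra.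
Qed.

Lemma Rabs_sin_le (y : R) : Rabs (sin y) <= Rabs y.
Proof.
  destruct (MVT_abs_between sin cos y derivable_pt_lim_sin) as [c [_ E]].
  rewrite sin_0, Rminus_0_r in E. rewrite E.
  pose proof (COS_bound c). pose proof (Rabs_pos y).
  assert (Rabs (cos c) <= 1) by (apply Rabs_le; lra). nra.
Qed.

Lemma Rabs_cos_sub1_le (y : R) : Rabs (cos y - 1) <= y ^ 2.
Proof.
  destruct (MVT_abs_between cos (fun t => - sin t) y derivable_pt_lim_cos) as [c [Hc E]].
  rewrite cos_0 in E. rewrite E, Rabs_Ropp.
  pose proof (Rabs_sin_le c). pose proof (Rabs_pos (sin c)).
  rewrite <- (pow2_abs y). simpl. nra.
Qed.

Lemma Rabs_sin_taylor1_le (y : R) : Rabs y <= 1 -> Rabs (sin y - y) <= y ^ 2.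
Proof.
  intros Hy.
  destruct (MVT_abs_between (fun t => sin t - t) (fun t => cos t - 1) y) as [c [Hc E]].
  { intros c. apply (derivable_pt_lim_minus sin id).
    apply derivable_pt_lim_sin. apply derivable_pt_lim_id. }
  rewrite sin_0, !Rminus_0_r in E. rewrite E.
  pose proof (Rabs_cos_sub1_le c). pose proof (Rabs_pos (cos c - 1)).
  pose proof (Rabs_pos c). rewrite <- (pow2_abs c) in H.
  rewrite <- (pow2_abs y). simpl in *. nra.
Qed.

Lemma Cmod_Cexp_taylor1_le (u : C) : Cmod u <= 1 ->
  Cmod (Cminus (Cminus (Cexp u) (RtoC 1)) u) <= 6 * Cmod u ^ 2.
Proof.
  intros Hu. rewrite Cmod2_alt.
  pose proof (re_le_Cmod u) as Hx. pose proof (Rabs_Im_le_Cmod u) as Hy.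
  destruct u as [x y]. unfold Re, Im in *; simpl in *.
  eapply Rle_trans; [apply Cmod_le_Rabs_Re_Im|]. unfold Cexp; simpl.
  assert (Hx1 : Rabs x <= 1) by lra.
  assert (He : exp x <= 3).
  { apply Rle_trans with (exp 1); [|apply exp_le_3].
    apply exp_le_mono. apply Rabs_le_between in Hx1; lra. }
  pose proof (exp_pos x).
  pose proof (Rabs_exp_taylor1_le x Hx1). pose proof (Rabs_cos_sub1_le y).
  pose proof (Rabs_exp_sub1_le x Hx1). pose proof (Rabs_sin_taylor1_le y ltac:(lra)).
  pose proof (Rabs_sin_le y).
  assert (Re_bound : Rabs (exp x * cos y - 1 - x) <= 3 * x ^ 2 + 3 * y ^ 2).
  { replace (exp x * cos y - 1 - x) with ((exp x - 1 - x) + exp x * (cos y - 1)) by ring.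
    eapply Rle_trans; [apply Rabs_triang|]. rewrite Rabs_mult, (Rabs_right (exp x)) by lra.
    pose proof (Rabs_pos (cos y - 1)). nra. }
  assert (Im_bound : Rabs (exp x * sin y - 0 - y) <= 3 * Rabs x * Rabs y + y ^ 2).
  { replace (exp x * sin y - 0 - y) with ((exp x - 1) * sin y + (sin y - y)) by ring.
    eapply Rle_trans; [apply Rabs_triang|]. rewrite Rabs_mult.
    pose proof (Rabs_pos (exp x - 1)). pose proof (Rabs_pos (sin y)). pose proof (Rabs_pos y).
    nra. }
  assert (Rabs x * Rabs y <= (x ^ 2 + y ^ 2) / 2).
  { rewrite <- (pow2_abs x), <- (pow2_abs y).
    pose proof (pow2_ge_0 (Rabs x - Rabs y)). nra. }
  unfold Rminus in Re_bound, Im_bound |- *. simpl in Re_bound, Im_bound |- *. nra.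
Qed.

(** * Complex differentiability *)

Notation is_Cderive f z l := (@is_derive C_AbsRing C_NormedModule f z l).

(* Coquelicot's product and chain rules need the codomain [AbsRing_NormedModule C_AbsRing];
   it differs from [C_NormedModule] only in its uniform structure, not in its norm, so the
   two notions of derivative agree. *)
Lemma is_Cderive_ring (f : C -> C) (z l : C) :
  is_Cderive f z l -> @is_derive C_AbsRing (AbsRing_NormedModule C_AbsRing) f z l.
Proof. intros [_ Hd]; split; [apply is_linear_scal_l|exact Hd]. Qed.

Lemma ring_is_Cderive (f : C -> C) (z l : C) :
  @is_derive C_AbsRing (AbsRing_NormedModule C_AbsRing) f z l -> is_Cderive f z l.
Proof. intros [_ Hd]; split; [apply is_linear_scal_l|exact Hd]. Qed.

Lemma is_Cderive_intro (f : C -> C) (z l : C) :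
  (forall eps : posreal, exists del : posreal, forall y, Cmod (Cminus y z) < del ->
     Cmod (Cminus (Cminus (f y) (f z)) (Cmult (Cminus y z) l)) <= eps * Cmod (Cminus y z)) ->
  is_Cderive f z l.
Proof.
  intros H. split; [apply is_linear_scal_l|].
  intros x Hx.
  apply (is_filter_lim_locally_unique (K:=C_AbsRing) (V:=AbsRing_NormedModule C_AbsRing)) in Hx.
  subst x. intros eps. destruct (H eps) as [d Hd]. exists d. exact Hd.
Qed.

Lemma is_Cderive_elim (f : C -> C) (z l : C) : is_Cderive f z l ->
  forall eps : posreal, exists del : posreal, forall y, Cmod (Cminus y z) < del ->
     Cmod (Cminus (Cminus (f y) (f z)) (Cmult (Cminus y z) l)) <= eps * Cmod (Cminus y z).
Proof.
  intros [_ H] eps. destruct (H z (fun P HP => HP) eps) as [d Hd]. exists d. exact Hd.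
Qed.

Lemma is_Cderive_ext (f g : C -> C) (z l : C) :
  (forall w, f w = g w) -> is_Cderive f z l -> is_Cderive g z l.
Proof. intros H. apply is_derive_ext. exact H. Qed.

Lemma is_Cderive_eq (f : C -> C) (z l l' : C) : l = l' -> is_Cderive f z l -> is_Cderive f z l'.
Proof. intros ->; auto. Qed.

Lemma is_Cderive_const (c z : C) : is_Cderive (fun _ => c) z (RtoC 0).
Proof. apply (is_derive_const (K:=C_AbsRing) (V:=C_NormedModule)). Qed.

Lemma is_Cderive_id (z : C) : is_Cderive (fun w => w) z (RtoC 1).
Proof. apply ring_is_Cderive, (is_derive_id (K:=C_AbsRing)). Qed.

Lemma is_Cderive_plus (f g : C -> C) (z df dg : C) :
  is_Cderive f z df -> is_Cderive g z dg ->
  is_Cderive (fun w => Cplus (f w) (g w)) z (Cplus df dg).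
Proof. apply (is_derive_plus (K:=C_AbsRing) (V:=C_NormedModule)). Qed.

Lemma is_Cderive_mult (f g : C -> C) (z df dg : C) :
  is_Cderive f z df -> is_Cderive g z dg ->
  is_Cderive (fun w => Cmult (f w) (g w)) z (Cplus (Cmult df (g z)) (Cmult (f z) dg)).
Proof.
  intros Hf Hg. apply ring_is_Cderive.
  apply (is_derive_mult (K:=C_AbsRing)); [apply is_Cderive_ring, Hf|apply is_Cderive_ring, Hg|].
  intros; apply Cmult_comm.
Qed.

Lemma is_Cderive_comp (f g : C -> C) (z df dg : C) :
  is_Cderive f (g z) df -> is_Cderive g z dg -> is_Cderive (fun w => f (g w)) z (Cmult dg df).
Proof.
  intros Hf Hg. apply (is_derive_comp (K:=C_AbsRing) (V:=C_NormedModule)); [exact Hf|].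
  apply is_Cderive_ring, Hg.
Qed.

Lemma is_Cderive_pow (n : nat) (z : C) :
  is_Cderive (fun w => Cpow w n) z (Cmult (RtoC (INR n)) (Cpow z (n - 1))).
Proof.
  induction n as [|n IH].
  - apply is_Cderive_eq with (RtoC 0); [simpl; ring|].
    apply is_Cderive_ext with (fun _ => RtoC 1); [reflexivity|apply is_Cderive_const].
  - eapply is_Cderive_eq; [|apply (is_Cderive_mult (fun w => w) (fun w => Cpow w n));
      [apply is_Cderive_id|apply IH]].
    rewrite S_INR. destruct n as [|k].
    + apply injective_projections; simpl; ring.
    + replace (S (S k) - 1)%nat with (S k) by lia. replace (S k - 1)%nat with k by lia.
      simpl. rewrite RtoC_plus. ring.
Qed.

Lemma is_Cderive_Cexp (z : C) : is_Cderive Cexp z (Cexp z).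
Proof.
  apply is_Cderive_intro. intros eps.
  set (K := 6 * Cmod (Cexp z) + 1).
  assert (HK : 0 < K) by (unfold K; pose proof (Cmod_ge_0 (Cexp z)); lra).
  assert (Hd : 0 < Rmin 1 (eps / K)).
  { apply Rmin_pos; [lra|apply Rdiv_lt_0_compat; [apply cond_pos|exact HK]]. }
  exists (mkposreal _ Hd). intros y Hy. simpl in Hy.
  set (u := Cminus y z).
  replace (Cminus (Cminus (Cexp y) (Cexp z)) (Cmult u (Cexp z)))
    with (Cmult (Cexp z) (Cminus (Cminus (Cexp u) (RtoC 1)) u)).
  2:{ replace y with (Cplus z u) by (unfold u; ring). rewrite Cexp_add. ring. }
  rewrite Cmod_mult. fold u in Hy.
  pose proof (Rlt_le_trans _ _ _ Hy (Rmin_l _ _)) as Hu1.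
  pose proof (Rlt_le_trans _ _ _ Hy (Rmin_r _ _)) as Hu2.
  pose proof (Cmod_Cexp_taylor1_le u (Rlt_le _ _ Hu1)) as HT.
  pose proof (Cmod_ge_0 (Cexp z)). pose proof (Cmod_ge_0 u).
  assert (Cmod u * K <= eps).
  { apply Rmult_le_reg_r with (/ K); [apply Rinv_0_lt_compat; lra|].
    rewrite Rmult_assoc, Rinv_r, Rmult_1_r by lra. left; exact Hu2. }
  unfold K in H1.
  apply Rle_trans with (Cmod (Cexp z) * (6 * Cmod u ^ 2)); [apply Rmult_le_compat_l; auto|].
  simpl. nra.
Qed.

Lemma entire_ext (f g : C -> C) : (forall w, f w = g w) -> entire f -> entire g.
Proof. intros E H z. destruct (H z) as [l Hl]. exists l. eapply is_Cderive_ext; eauto. Qed.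

Lemma entire_const (c : C) : entire (fun _ => c).
Proof. intros z; eexists; apply is_Cderive_const. Qed.

Lemma entire_pow (n : nat) : entire (fun w => Cpow w n).
Proof. intros z; eexists; apply is_Cderive_pow. Qed.

Lemma entire_mult (f g : C -> C) : entire f -> entire g -> entire (fun w => Cmult (f w) (g w)).
Proof.
  intros Hf Hg z. destruct (Hf z) as [a Ha], (Hg z) as [b Hb].
  eexists; apply is_Cderive_mult; eauto.
Qed.

Lemma entire_Cexp_comp (g : C -> C) : entire g -> entire (fun w => Cexp (g w)).
Proof.
  intros Hg z. destruct (Hg z) as [b Hb].
  eexists; apply (is_Cderive_comp Cexp g); [apply is_Cderive_Cexp|exact Hb].
Qed.

Lemma entire_Cexp_monomial (c : C) (m : nat) : entire (fun w => Cexp (Cmult c (Cpow w m))).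
Proof. apply entire_Cexp_comp, entire_mult; [apply entire_const|apply entire_pow]. Qed.

Definition Ccontinuous (h : C -> C) : Prop :=
  forall z eps, 0 < eps -> exists del, 0 < del /\
    forall y, Cmod (Cminus y z) < del -> Cmod (Cminus (h y) (h z)) < eps.

Lemma entire_Ccontinuous (h : C -> C) : entire h -> Ccontinuous h.
Proof.
  intros He z eps Heps. destruct (He z) as [l Hl].
  destruct (is_Cderive_elim h z l Hl (mkposreal 1 Rlt_0_1)) as [d Hd].
  set (del := Rmin d (eps / (Cmod l + 2))).
  pose proof (Cmod_ge_0 l).
  assert (Hdel : 0 < del) by (apply Rmin_pos; [apply cond_pos|apply Rdiv_lt_0_compat; lra]).
  exists del. split; [exact Hdel|]. intros y Hy.
  specialize (Hd y (Rlt_le_trans _ _ _ Hy (Rmin_l _ _))). simpl in Hd.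
  assert (Hy2 : Cmod (Cminus y z) * (Cmod l + 2) < eps).
  { apply Rmult_lt_reg_r with (/ (Cmod l + 2)); [apply Rinv_0_lt_compat; lra|].
    rewrite Rmult_assoc, Rinv_r, Rmult_1_r by lra. exact (Rlt_le_trans _ _ _ Hy (Rmin_r _ _)). }
  replace (Cminus (h y) (h z)) with
    (Cplus (Cminus (Cminus (h y) (h z)) (Cmult (Cminus y z) l)) (Cmult (Cminus y z) l)) by ring.
  eapply Rle_lt_trans; [apply Cmod_triangle|]. rewrite Cmod_mult.
  pose proof (Cmod_ge_0 (Cminus y z)). nra.
Qed.

Lemma Ccontinuous_const (c : C) : Ccontinuous (fun _ => c).
Proof. apply entire_Ccontinuous, entire_const. Qed.

Lemma Ccontinuous_affine (c d : C) : Ccontinuous (fun w => Cplus c (Cmult d w)).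
Proof.
  apply entire_Ccontinuous. intros z. eexists.
  apply is_Cderive_plus; [apply is_Cderive_const|].
  apply (is_Cderive_mult (fun _ => d) (fun w => w)); [apply is_Cderive_const|apply is_Cderive_id].
Qed.

Lemma Ccontinuous_plus (h1 h2 : C -> C) :
  Ccontinuous h1 -> Ccontinuous h2 -> Ccontinuous (fun w => Cplus (h1 w) (h2 w)).
Proof.
  intros H1 H2 z eps Heps.
  destruct (H1 z (eps/2) ltac:(lra)) as [d1 [Hd1 Hd1']].
  destruct (H2 z (eps/2) ltac:(lra)) as [d2 [Hd2 Hd2']].
  exists (Rmin d1 d2). split; [apply Rmin_pos; auto|]. intros y Hy.
  specialize (Hd1' y (Rlt_le_trans _ _ _ Hy (Rmin_l _ _))).
  specialize (Hd2' y (Rlt_le_trans _ _ _ Hy (Rmin_r _ _))).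
  replace (Cminus (Cplus (h1 y) (h2 y)) (Cplus (h1 z) (h2 z))) with
    (Cplus (Cminus (h1 y) (h1 z)) (Cminus (h2 y) (h2 z))) by ring.
  eapply Rle_lt_trans; [apply Cmod_triangle|]. lra.
Qed.

Lemma Ccontinuous_scal (c : C) (h : C -> C) : Ccontinuous h -> Ccontinuous (fun w => Cmult c (h w)).
Proof.
  intros H z eps Heps. pose proof (Cmod_ge_0 c).
  destruct (H z (eps / (Cmod c + 1))) as [d [Hd Hd']]; [apply Rdiv_lt_0_compat; lra|].
  exists d. split; [exact Hd|]. intros y Hy. specialize (Hd' y Hy).
  replace (Cminus (Cmult c (h y)) (Cmult c (h z))) with (Cmult c (Cminus (h y) (h z))) by ring.
  rewrite Cmod_mult. pose proof (Cmod_ge_0 (Cminus (h y) (h z))).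
  apply Rle_lt_trans with ((Cmod c + 1) * Cmod (Cminus (h y) (h z))); [nra|].
  apply Rmult_lt_reg_r with (/ (Cmod c + 1)); [apply Rinv_0_lt_compat; lra|].
  replace ((Cmod c + 1) * Cmod (Cminus (h y) (h z)) * / (Cmod c + 1))
    with (Cmod (Cminus (h y) (h z))) by (field; lra).
  exact Hd'.
Qed.

(** * Integrals along segments *)

Notation CRInt g a b := (RInt (V:=C_R_CompleteNormedModule) g a b).
Notation is_CRInt g a b l := (is_RInt (V:=C_R_NormedModule) g a b l).

Lemma norm_C_R (x : C) : norm (K:=R_AbsRing) (V:=C_R_NormedModule) x = Cmod x.
Proof.
  unfold norm; simpl. unfold prod_norm, Cmod; simpl. f_equal.
  change (@norm R_AbsRing R_NormedModule (fst x)) with (Rabs (fst x)).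
  change (@norm R_AbsRing R_NormedModule (snd x)) with (Rabs (snd x)).
  rewrite !Rmult_1_r, <- !Rabs_mult, !Rabs_right; nra.
Qed.

Lemma scal_C_R (k : R) (x : C) : scal (V:=C_R_NormedModule) k x = Cmult (RtoC k) x.
Proof.
  destruct x as [x1 x2]. change (scal (V:=C_R_NormedModule) k (x1,x2)) with (prod_scal k (x1,x2)).
  unfold prod_scal; simpl. change (scal k x1) with (k*x1). change (scal k x2) with (k*x2).
  apply injective_projections; simpl; ring.
Qed.

Lemma is_CRInt_unique (g : R -> C) (a b : R) (l1 l2 : C) :
  is_CRInt g a b l1 -> is_CRInt g a b l2 -> l1 = l2.
Proof.
  intros H1 H2. apply (is_RInt_unique (V:=C_R_CompleteNormedModule)) in H1.
  apply (is_RInt_unique (V:=C_R_CompleteNormedModule)) in H2. congruence.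
Qed.

Lemma is_CRInt_fst (g : R -> C) (a b : R) (l : C) :
  is_CRInt g a b l -> is_RInt (fun t => fst (g t)) a b (fst l).
Proof. apply (is_RInt_fct_extend_fst (U:=R_NormedModule) (V:=R_NormedModule)). Qed.

Lemma is_CRInt_snd (g : R -> C) (a b : R) (l : C) :
  is_CRInt g a b l -> is_RInt (fun t => snd (g t)) a b (snd l).
Proof. apply (is_RInt_fct_extend_snd (U:=R_NormedModule) (V:=R_NormedModule)). Qed.

Lemma is_CRInt_pair (g : R -> C) (a b l1 l2 : R) :
  is_RInt (fun t => fst (g t)) a b l1 -> is_RInt (fun t => snd (g t)) a b l2 ->
  is_CRInt g a b (l1, l2).
Proof. apply (is_RInt_fct_extend_pair (U:=R_NormedModule) (V:=R_NormedModule)). Qed.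

Lemma is_CRInt_Cmult (c : C) (g : R -> C) (a b : R) (l : C) :
  is_CRInt g a b l -> is_CRInt (fun t => Cmult c (g t)) a b (Cmult c l).
Proof.
  intros H. pose proof (is_CRInt_fst _ _ _ _ H) as H1. pose proof (is_CRInt_snd _ _ _ _ H) as H2.
  destruct c as [c1 c2], l as [l1 l2]. simpl in H1, H2.
  apply is_CRInt_pair; simpl.
  - apply (is_RInt_ext (fun t => minus (scal c1 (fst (g t))) (scal c2 (snd (g t))))); [reflexivity|].
    apply (is_RInt_minus (V:=R_NormedModule)); apply (is_RInt_scal (V:=R_NormedModule)); auto.
  - apply (is_RInt_ext (fun t => plus (scal c1 (snd (g t))) (scal c2 (fst (g t))))); [reflexivity|].
    apply (is_RInt_plus (V:=R_NormedModule)); apply (is_RInt_scal (V:=R_NormedModule)); auto.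
Qed.

Definition segment_fun (h : C -> C) (p q : C) (t : R) : C :=
  h (Cplus p (Cmult (RtoC t) (Cminus q p))).

Definition segment_mean (h : C -> C) (p q : C) : C := CRInt (segment_fun h p q) 0 1.
Definition segment_int (h : C -> C) (p q : C) : C := Cmult (Cminus q p) (segment_mean h p q).

Lemma segment_fun_near (h : C -> C) (p q : C) (t : R) : Ccontinuous h ->
  forall eps, 0 < eps -> exists del, 0 < del /\ forall t', Rabs (t' - t) < del ->
    Cmod (Cminus (segment_fun h p q t') (segment_fun h p q t)) < eps.
Proof.
  intros Hh eps Heps.
  destruct (Hh (Cplus p (Cmult (RtoC t) (Cminus q p))) eps Heps) as [d [Hd Hd']].
  pose proof (Cmod_ge_0 (Cminus q p)).
  exists (d / (Cmod (Cminus q p) + 1)). split; [apply Rdiv_lt_0_compat; lra|].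
  intros t' Ht'. apply Hd'.
  replace (Cminus (Cplus p (Cmult (RtoC t') (Cminus q p))) (Cplus p (Cmult (RtoC t) (Cminus q p))))
    with (Cmult (RtoC (t' - t)) (Cminus q p)) by (rewrite RtoC_minus; ring).
  rewrite Cmod_mult, Cmod_R.
  apply Rle_lt_trans with (Rabs (t' - t) * (Cmod (Cminus q p) + 1));
    [apply Rmult_le_compat_l; [apply Rabs_pos|lra]|].
  apply Rmult_lt_reg_r with (/ (Cmod (Cminus q p) + 1)); [apply Rinv_0_lt_compat; lra|].
  rewrite Rmult_assoc, Rinv_r, Rmult_1_r by lra. exact Ht'.
Qed.

Lemma ex_RInt_segment_fun (h : C -> C) (p q : C) (a b : R) : Ccontinuous h ->
  ex_RInt (V:=C_R_CompleteNormedModule) (segment_fun h p q) a b.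
Proof.
  intros Hh. apply ex_RInt_continuous. intros t _.
  apply (filterlim_locally (T:=R_UniformSpace) (U:=C_R_NormedModule)). intros eps.
  destruct (segment_fun_near h p q t Hh eps (cond_pos eps)) as [d [Hd Hd']].
  exists (mkposreal d Hd). intros t' Ht'. specialize (Hd' t' Ht').
  set (g := segment_fun h p q) in Hd' |- *.
  pose proof (re_le_Cmod (Cminus (g t') (g t))). pose proof (Rabs_Im_le_Cmod (Cminus (g t') (g t))).
  unfold Re, Im in *; simpl in *. split.
  - change (Rabs (fst (g t') - fst (g t)) < eps). unfold Rminus. lra.
  - change (Rabs (snd (g t') - snd (g t)) < eps). unfold Rminus. lra.
Qed.

Lemma ex_RInt_Cmod_segment_fun (h : C -> C) (p q : C) (a b : R) : Ccontinuous h ->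
  ex_RInt (fun t => Cmod (segment_fun h p q t)) a b.
Proof.
  intros Hh. apply (ex_RInt_continuous (V:=R_CompleteNormedModule)). intros t _.
  apply filterlim_locally. intros eps.
  destruct (segment_fun_near h p q t Hh eps (cond_pos eps)) as [d [Hd Hd']].
  exists (mkposreal d Hd). intros t' Ht'.
  change (Rabs (Cmod (segment_fun h p q t') - Cmod (segment_fun h p q t)) < eps).
  eapply Rle_lt_trans; [apply Rabs_Cmod_sub_le|exact (Hd' t' Ht')].
Qed.

Lemma is_CRInt_segment_mean (h : C -> C) (p q : C) : Ccontinuous h ->
  is_CRInt (segment_fun h p q) 0 1 (segment_mean h p q).
Proof.
  intros Hh. apply (RInt_correct (V:=C_R_CompleteNormedModule)), ex_RInt_segment_fun, Hh.
Qed.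

Lemma segment_mean_ext (h1 h2 : C -> C) (p q : C) :
  (forall w, h1 w = h2 w) -> segment_mean h1 p q = segment_mean h2 p q.
Proof.
  intros H. unfold segment_mean, segment_fun. f_equal.
  apply functional_extensionality. intros; apply H.
Qed.

Lemma Cmod_segment_mean_le (h : C -> C) (p q : C) : Ccontinuous h ->
  Cmod (segment_mean h p q) <= RInt (fun t => Cmod (segment_fun h p q t)) 0 1.
Proof.
  intros Hh. rewrite <- norm_C_R.
  apply (norm_RInt_le (V:=C_R_NormedModule) (segment_fun h p q) (fun t => Cmod (segment_fun h p q t)) 0 1).
  - lra.
  - intros x _. rewrite norm_C_R. lra.
  - apply is_CRInt_segment_mean, Hh.
  - apply (RInt_correct (V:=R_CompleteNormedModule)), ex_RInt_Cmod_segment_fun, Hh.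
Qed.

Lemma Cmod_segment_mean_le_sup (h : C -> C) (p q : C) (B : R) : Ccontinuous h ->
  (forall t, 0 < t < 1 -> Cmod (segment_fun h p q t) <= B) -> Cmod (segment_mean h p q) <= B.
Proof.
  intros Hh HB. eapply Rle_trans; [apply Cmod_segment_mean_le, Hh|].
  replace B with (RInt (fun _ => B) 0 1)
    by (rewrite RInt_const; change (((1 - 0) * B)%R = B); ring).
  apply RInt_le; [lra|apply ex_RInt_Cmod_segment_fun, Hh|apply ex_RInt_const|].
  intros; apply HB; lra.
Qed.

Lemma Cmod_segment_int_le_sup (h : C -> C) (p q : C) (B : R) : Ccontinuous h ->
  (forall t, 0 < t < 1 -> Cmod (segment_fun h p q t) <= B) ->
  Cmod (segment_int h p q) <= Cmod (Cminus q p) * B.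
Proof.
  intros Hh HB. unfold segment_int. rewrite Cmod_mult.
  apply Rmult_le_compat_l; [apply Cmod_ge_0|apply Cmod_segment_mean_le_sup; auto].
Qed.

Lemma segment_mean_plus (h1 h2 : C -> C) (p q : C) : Ccontinuous h1 -> Ccontinuous h2 ->
  segment_mean (fun w => Cplus (h1 w) (h2 w)) p q
  = Cplus (segment_mean h1 p q) (segment_mean h2 p q).
Proof.
  intros H1 H2. apply (is_CRInt_unique (segment_fun (fun w => Cplus (h1 w) (h2 w)) p q) 0 1).
  - apply is_CRInt_segment_mean, Ccontinuous_plus; auto.
  - apply (is_RInt_plus (V:=C_R_NormedModule) (segment_fun h1 p q) (segment_fun h2 p q));
      apply is_CRInt_segment_mean; auto.
Qed.

Lemma segment_mean_scal (c : C) (h : C -> C) (p q : C) : Ccontinuous h ->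
  segment_mean (fun w => Cmult c (h w)) p q = Cmult c (segment_mean h p q).
Proof.
  intros H. apply (is_CRInt_unique (segment_fun (fun w => Cmult c (h w)) p q) 0 1).
  - apply is_CRInt_segment_mean, Ccontinuous_scal, H.
  - apply (is_CRInt_Cmult c (segment_fun h p q)), is_CRInt_segment_mean, H.
Qed.

Lemma is_RInt_affine (a b : R) : is_RInt (fun t => a + b * t) 0 1 (a + b / 2).
Proof.
  replace (a + b / 2) with
    (minus ((fun t => a * t + b * (t ^ 2 / 2)) 1) ((fun t => a * t + b * (t ^ 2 / 2)) 0))
    by (unfold minus, plus, opp; simpl; field).
  apply (is_RInt_derive (V:=R_CompleteNormedModule) (fun t => a * t + b * (t ^ 2 / 2))).
  - intros x _. auto_derive; auto. field.
  - intros x _. apply (continuous_plus (V:=R_NormedModule)); [apply continuous_const|].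
    apply (continuous_scal_r (K:=R_AbsRing) (V:=R_NormedModule)), continuous_id.
Qed.

Lemma segment_mean_affine (c d p q : C) :
  segment_mean (fun w => Cplus c (Cmult d w)) p q
  = Cplus c (Cmult d (Cmult (Cplus p q) (RtoC (/2)))).
Proof.
  apply (is_CRInt_unique (segment_fun (fun w => Cplus c (Cmult d w)) p q) 0 1).
  - apply is_CRInt_segment_mean, Ccontinuous_affine.
  - set (v := Cminus q p).
    set (c' := Cplus c (Cmult d p)). set (d' := Cmult d v).
    replace (Cplus c (Cmult d (Cmult (Cplus p q) (RtoC (/2)))))
      with (fst c' + fst d' / 2, snd c' + snd d' / 2)
      by (unfold c', d', v; apply injective_projections; simpl; field).
    apply is_CRInt_pair.
    + eapply is_RInt_ext; [|apply is_RInt_affine].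
      intros t _. unfold segment_fun, c', d', v. simpl. ring.
    + eapply is_RInt_ext; [|apply is_RInt_affine].
      intros t _. unfold segment_fun, c', d', v. simpl. ring.
Qed.

Lemma segment_mean_const (c p q : C) : segment_mean (fun _ => c) p q = c.
Proof.
  rewrite (segment_mean_ext _ (fun w => Cplus c (Cmult (RtoC 0) w))) by (intros; ring).
  rewrite segment_mean_affine. ring.
Qed.

Lemma segment_int_subsegment (h : C -> C) (p q : C) (s s' : R) : Ccontinuous h ->
  segment_int h (Cplus p (Cmult (RtoC s) (Cminus q p))) (Cplus p (Cmult (RtoC s') (Cminus q p)))
  = Cmult (Cminus q p) (CRInt (segment_fun h p q) s s').
Proof.
  intros Hh. set (g := segment_fun h p q).
  assert (Hsub : is_CRInt (fun t => Cmult (RtoC (s' - s)) (g ((s' - s) * t + s))) 0 1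
                   (CRInt g s s')).
  { eapply is_RInt_ext; [intros t _; apply scal_C_R|].
    apply (is_RInt_comp_lin (V:=C_R_NormedModule)).
    replace ((s' - s) * 0 + s) with s by ring. replace ((s' - s) * 1 + s) with s' by ring.
    apply (RInt_correct (V:=C_R_CompleteNormedModule)), ex_RInt_segment_fun, Hh. }
  unfold segment_int.
  replace (Cminus (Cplus p (Cmult (RtoC s') (Cminus q p))) (Cplus p (Cmult (RtoC s) (Cminus q p))))
    with (Cmult (Cminus q p) (RtoC (s' - s))) by (rewrite RtoC_minus; ring).
  rewrite <- Cmult_assoc. f_equal.
  apply (is_CRInt_unique _ 0 1 _ _ (is_CRInt_Cmult (RtoC (s' - s)) _ _ _ _
           (is_CRInt_segment_mean h _ _ Hh))).
  eapply is_RInt_ext; [|exact Hsub]. intros t _. unfold g, segment_fun. do 2 f_equal.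
  rewrite RtoC_plus, RtoC_mult, RtoC_minus. ring.
Qed.

Lemma segment_int_rev (h : C -> C) (p q : C) : Ccontinuous h ->
  segment_int h q p = Copp (segment_int h p q).
Proof.
  intros Hh.
  transitivity (segment_int h (Cplus p (Cmult (RtoC 1) (Cminus q p)))
                              (Cplus p (Cmult (RtoC 0) (Cminus q p)))); [f_equal; ring|].
  rewrite segment_int_subsegment by exact Hh.
  rewrite <- (opp_RInt_swap (V:=C_R_CompleteNormedModule)) by (apply ex_RInt_segment_fun, Hh).
  change (opp (G:=C_R_CompleteNormedModule) ?a) with (Copp a). unfold segment_int, segment_mean.
  ring.
Qed.

Definition midpoint (p q : C) : C := Cmult (Cplus p q) (RtoC (/2)).

Lemma segment_int_split (h : C -> C) (p q : C) : Ccontinuous h ->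
  segment_int h p q = Cplus (segment_int h p (midpoint p q)) (segment_int h (midpoint p q) q).
Proof.
  intros Hh.
  set (P := fun s => Cplus p (Cmult (RtoC s) (Cminus q p))).
  replace (midpoint p q) with (P (1/2))
    by (unfold P, midpoint; apply injective_projections; simpl; field).
  transitivity (Cplus (segment_int h (P 0) (P (1/2))) (segment_int h (P (1/2)) (P 1))).
  2:{ unfold P. f_equal; f_equal; ring. }
  unfold P. rewrite !segment_int_subsegment by exact Hh.
  rewrite <- Cmult_plus_distr_l.
  change (Cplus ?a ?b) with (plus (G:=C_R_CompleteNormedModule) a b).
  rewrite (RInt_Chasles (V:=C_R_CompleteNormedModule)) by (apply ex_RInt_segment_fun, Hh).
  reflexivity.
Qed.

(** * Goursat's lemma *)

Definition triangle_int (h : C -> C) (a b c : C) : C :=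
  Cplus (Cplus (segment_int h a b) (segment_int h b c)) (segment_int h c a).

Definition perimeter (a b c : C) : R :=
  Cmod (Cminus b a) + Cmod (Cminus c b) + Cmod (Cminus a c).

Lemma triangle_int_ext (h1 h2 : C -> C) (a b c : C) :
  (forall w, h1 w = h2 w) -> triangle_int h1 a b c = triangle_int h2 a b c.
Proof.
  intros H. unfold triangle_int, segment_int. rewrite !(segment_mean_ext h1 h2) by exact H.
  reflexivity.
Qed.

Lemma triangle_int_plus (h1 h2 : C -> C) (a b c : C) : Ccontinuous h1 -> Ccontinuous h2 ->
  triangle_int (fun w => Cplus (h1 w) (h2 w)) a b c
  = Cplus (triangle_int h1 a b c) (triangle_int h2 a b c).
Proof. intros H1 H2. unfold triangle_int, segment_int. rewrite !segment_mean_plus by auto. ring. Qed.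

Lemma triangle_int_affine (c d : C) (a b e : C) :
  triangle_int (fun w => Cplus c (Cmult d w)) a b e = RtoC 0.
Proof.
  unfold triangle_int, segment_int. rewrite !segment_mean_affine.
  apply injective_projections; simpl; field.
Qed.

Lemma triangle_int_quarters (h : C -> C) (a b c : C) : Ccontinuous h ->
  let ab := midpoint a b in let bc := midpoint b c in let ca := midpoint c a in
  triangle_int h a b c
  = Cplus (Cplus (triangle_int h a ab ca) (triangle_int h ab b bc))
          (Cplus (triangle_int h ca bc c) (triangle_int h bc ca ab)).
Proof.
  intros Hh ab bc ca. unfold triangle_int.
  rewrite (segment_int_split h a b Hh), (segment_int_split h b c Hh),
          (segment_int_split h c a Hh).
  rewrite (segment_int_rev h ca ab Hh), (segment_int_rev h ab bc Hh), (segment_int_rev h bc ca Hh).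
  fold ab bc ca. ring.
Qed.

Lemma perimeter_nonneg (a b c : C) : 0 <= perimeter a b c.
Proof.
  unfold perimeter. pose proof (Cmod_ge_0 (Cminus b a)). pose proof (Cmod_ge_0 (Cminus c b)).
  pose proof (Cmod_ge_0 (Cminus a c)). lra.
Qed.

Lemma Cmod_sub_vertex_le_perimeter (a b c : C) :
  Cmod (Cminus b a) <= perimeter a b c /\ Cmod (Cminus c a) <= perimeter a b c.
Proof.
  unfold perimeter. rewrite (Cmod_Cminus_sym c a).
  pose proof (Cmod_ge_0 (Cminus b a)). pose proof (Cmod_ge_0 (Cminus c b)).
  pose proof (Cmod_ge_0 (Cminus a c)). lra.
Qed.

Lemma Cmod_segment_point_le (a p q : C) (L t : R) :
  Cmod (Cminus p a) <= L -> Cmod (Cminus q a) <= L -> 0 <= t <= 1 ->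
  Cmod (Cminus (Cplus p (Cmult (RtoC t) (Cminus q p))) a) <= L.
Proof.
  intros Hp Hq Ht.
  replace (Cminus (Cplus p (Cmult (RtoC t) (Cminus q p))) a) with
    (Cplus (Cmult (RtoC (1 - t)) (Cminus p a)) (Cmult (RtoC t) (Cminus q a)))
    by (rewrite RtoC_minus; ring).
  eapply Rle_trans; [apply Cmod_triangle|]. rewrite !Cmod_mult, !Cmod_R, !Rabs_right by lra.
  nra.
Qed.

(* The whole triangle lies in the closed disc of radius [perimeter a b c] about [a]. *)
Lemma Cmod_triangle_int_le (h : C -> C) (a b c : C) (B : R) : Ccontinuous h ->
  (forall w, Cmod (Cminus w a) <= perimeter a b c -> Cmod (h w) <= B) ->
  Cmod (triangle_int h a b c) <= perimeter a b c * B.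
Proof.
  intros Hh HB. destruct (Cmod_sub_vertex_le_perimeter a b c) as [Hb Hc].
  assert (Ha : Cmod (Cminus a a) <= perimeter a b c)
    by (replace (Cminus a a) with (RtoC 0) by ring; rewrite Cmod_0; apply perimeter_nonneg).
  assert (Edge : forall p q, Cmod (Cminus p a) <= perimeter a b c ->
            Cmod (Cminus q a) <= perimeter a b c ->
            Cmod (segment_int h p q) <= Cmod (Cminus q p) * B).
  { intros p q Hp Hq. apply Cmod_segment_int_le_sup; [exact Hh|].
    intros t Ht. apply HB, Cmod_segment_point_le; auto; lra. }
  unfold triangle_int, perimeter.
  pose proof (Edge a b Ha Hb). pose proof (Edge b c Hb Hc). pose proof (Edge c a Hc Ha).
  eapply Rle_trans; [apply Cmod_triangle|].
  eapply Rle_trans; [apply Rplus_le_compat_r, Cmod_triangle|]. lra.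
Qed.

Lemma Cmod_half_edge (u v x y : C) :
  Cminus u v = Cmult (Cminus x y) (RtoC (/2)) -> Cmod (Cminus u v) = Cmod (Cminus x y) / 2.
Proof. intros ->. apply Cmod_scale_half. Qed.

Lemma Cmod_half_edge_rev (u v x y : C) :
  Cminus u v = Cmult (Cminus y x) (RtoC (/2)) -> Cmod (Cminus u v) = Cmod (Cminus x y) / 2.
Proof. intros ->. rewrite Cmod_scale_half, Cmod_Cminus_sym. reflexivity. Qed.

Lemma perimeter_half_edges (a b c a' b' c' : C) :
  Cmod (Cminus b' a') = Cmod (Cminus b a) / 2 -> Cmod (Cminus c' b') = Cmod (Cminus c b) / 2 ->
  Cmod (Cminus a' c') = Cmod (Cminus a c) / 2 -> perimeter a' b' c' = perimeter a b c / 2.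
Proof. unfold perimeter. lra. Qed.

Ltac half_edge :=
  first [ apply Cmod_half_edge; unfold midpoint; apply injective_projections; simpl; field
        | apply Cmod_half_edge_rev; unfold midpoint; apply injective_projections; simpl; field ].

Definition heavy_quarter (h : C -> C) (T T' : C * C * C) : Prop :=
  let '(a, b, c) := T in let '(a', b', c') := T' in
  perimeter a' b' c' = perimeter a b c / 2 /\ Cmod (Cminus a' a) <= perimeter a b c /\
  Cmod (triangle_int h a b c) <= 4 * Cmod (triangle_int h a' b' c').

(* Pigeonhole over the four terms of [triangle_int_quarters]. *)
Lemma exists_heavy_quarter (h : C -> C) (T : C * C * C) : Ccontinuous h ->
  exists T', heavy_quarter h T T'.
Proof.
  intros Hh. destruct T as [[a b] c].
  pose proof (triangle_int_quarters h a b c Hh) as HQ. cbv zeta in HQ.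
  set (ab := midpoint a b) in HQ |- *. set (bc := midpoint b c) in HQ |- *.
  set (ca := midpoint c a) in HQ |- *.
  destruct (Cmod_sub_vertex_le_perimeter a b c) as [Hb Hc].
  assert (Hab : Cmod (Cminus ab a) = Cmod (Cminus b a) / 2) by (unfold ab; half_edge).
  assert (Hca : Cmod (Cminus ca a) = Cmod (Cminus c a) / 2) by (unfold ca; half_edge).
  assert (Hbc : Cmod (Cminus bc a) <= perimeter a b c).
  { replace (Cminus bc a) with (Cmult (Cplus (Cminus b a) (Cminus c a)) (RtoC (/2)))
      by (unfold bc, midpoint; apply injective_projections; simpl; field).
    rewrite Cmod_scale_half. pose proof (Cmod_triangle (Cminus b a) (Cminus c a)). lra. }
  pose proof (Cmod_ge_0 (Cminus b a)). pose proof (Cmod_ge_0 (Cminus c a)).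
  assert (Hsum : Cmod (triangle_int h a b c) <=
    Cmod (triangle_int h a ab ca) + Cmod (triangle_int h ab b bc)
    + Cmod (triangle_int h ca bc c) + Cmod (triangle_int h bc ca ab)).
  { rewrite HQ. eapply Rle_trans; [apply Cmod_triangle|].
    pose proof (Cmod_triangle (triangle_int h a ab ca) (triangle_int h ab b bc)).
    pose proof (Cmod_triangle (triangle_int h ca bc c) (triangle_int h bc ca ab)). lra. }
  destruct (Rle_dec (Cmod (triangle_int h a b c)) (4 * Cmod (triangle_int h a ab ca))).
  { exists (a, ab, ca). repeat split; [apply perimeter_half_edges; unfold ab, ca; half_edge|..].
    - replace (Cminus a a) with (RtoC 0) by ring. rewrite Cmod_0. apply perimeter_nonneg.
    - exact r. }
  destruct (Rle_dec (Cmod (triangle_int h a b c)) (4 * Cmod (triangle_int h ab b bc))).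
  { exists (ab, b, bc). repeat split; [apply perimeter_half_edges; unfold ab, bc; half_edge|lra|exact r]. }
  destruct (Rle_dec (Cmod (triangle_int h a b c)) (4 * Cmod (triangle_int h ca bc c))).
  { exists (ca, bc, c). repeat split; [apply perimeter_half_edges; unfold ca, bc; half_edge|lra|exact r]. }
  exists (bc, ca, ab). repeat split; [apply perimeter_half_edges; unfold ab, bc, ca; half_edge|lra|lra].
Qed.

Lemma pow_half_lt (eps : R) : 0 < eps -> exists N, forall n, (N <= n)%nat -> (/2) ^ n < eps.
Proof.
  intros He. assert (Hq : Rabs (/2) < 1) by (rewrite Rabs_right; lra).
  pose proof (is_lim_seq_geom (/2) Hq) as H. apply is_lim_seq_spec in H.
  destruct (H (mkposreal eps He)) as [N HN]. exists N. intros n Hn.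
  specialize (HN n Hn). simpl in HN. rewrite Rminus_0_r in HN.
  eapply Rle_lt_trans; [apply Rle_abs|exact HN].
Qed.

Lemma geometric_cauchy_limit (u : nat -> R) (K : R) :
  (forall n, Rabs (u (S n) - u n) <= K * (/2) ^ n) ->
  exists X, forall n, Rabs (u n - X) <= 2 * K * (/2) ^ n.
Proof.
  intros H.
  assert (HK : 0 <= K) by (specialize (H O); pose proof (Rabs_pos (u 1%nat - u 0%nat)); simpl in H; lra).
  assert (Tail : forall n k, Rabs (u (n + k)%nat - u n) <= 2 * K * (/2) ^ n - 2 * K * (/2) ^ (n + k)).
  { intros n k. induction k as [|k IH].
    - rewrite Nat.add_0_r. unfold Rminus. rewrite Rplus_opp_r, Rabs_R0. lra.
    - replace (n + S k)%nat with (S (n + k)) by lia.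
      replace (u (S (n + k)) - u n) with ((u (S (n + k)) - u (n + k)%nat) + (u (n + k)%nat - u n))
        by ring.
      eapply Rle_trans; [apply Rabs_triang|]. specialize (H (n + k)%nat). simpl (_ ^ S _). lra. }
  assert (Hc : ex_lim_seq_cauchy u).
  { intros eps. destruct (pow_half_lt (eps / (4 * K + 1))) as [N HN].
    { apply Rdiv_lt_0_compat; [apply cond_pos|lra]. }
    exists N. intros n m Hn Hm.
    pose proof (Tail N (n - N)%nat) as H1. pose proof (Tail N (m - N)%nat) as H2.
    replace (N + (n - N))%nat with n in H1 by lia. replace (N + (m - N))%nat with m in H2 by lia.
    pose proof (pow_lt (/2) n ltac:(lra)). pose proof (pow_lt (/2) m ltac:(lra)).
    pose proof (pow_lt (/2) N ltac:(lra)). specialize (HN N (le_n N)).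
    assert (4 * K * (/2) ^ N < eps).
    { apply Rle_lt_trans with ((4 * K + 1) * (/2) ^ N); [nra|].
      apply Rmult_lt_reg_r with (/ (4 * K + 1)); [apply Rinv_0_lt_compat; lra|].
      replace ((4 * K + 1) * (/ 2) ^ N * / (4 * K + 1)) with ((/2) ^ N) by (field; lra).
      exact HN. }
    replace (u n - u m) with ((u n - u N) - (u m - u N)) by ring.
    eapply Rle_lt_trans; [apply Rabs_triang|]. rewrite Rabs_Ropp.
    assert (0 <= 2 * K * (/2) ^ n) by nra. assert (0 <= 2 * K * (/2) ^ m) by nra. lra. }
  apply ex_lim_seq_cauchy_corr in Hc. destruct Hc as [X HX].
  exists X. intros n. apply (is_lim_seq_incr_n u n) in HX.
  assert (Hb : forall k, u n - 2 * K * (/2) ^ n <= u (k + n)%nat <= u n + 2 * K * (/2) ^ n).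
  { intros k. specialize (Tail n k). rewrite Nat.add_comm.
    pose proof (pow_lt (/2) (n + k) ltac:(lra)). apply Rabs_le_between in Tail.
    assert (0 <= 2 * K * (/2) ^ (n + k)) by nra. lra. }
  pose proof (is_lim_seq_le _ _ _ _ (fun k => proj1 (Hb k)) (is_lim_seq_const _) HX) as L1.
  pose proof (is_lim_seq_le _ _ _ _ (fun k => proj2 (Hb k)) HX (is_lim_seq_const _)) as L2.
  simpl in L1, L2. apply Rabs_le. lra.
Qed.

Lemma nested_triangles (h : C -> C) (a b c : C) : Ccontinuous h ->
  exists z0, forall n, exists a' b' c',
    perimeter a' b' c' = perimeter a b c * (/2) ^ n /\
    Cmod (Cminus a' z0) <= 4 * perimeter a b c * (/2) ^ n /\
    Cmod (triangle_int h a b c) <= 4 ^ n * Cmod (triangle_int h a' b' c').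
Proof.
  intros Hh. set (L := perimeter a b c).
  set (step := fun T => proj1_sig (constructive_indefinite_description _ (exists_heavy_quarter h T Hh))).
  set (T := fun n => Nat.iter n step (a, b, c)).
  assert (Hstep : forall n, heavy_quarter h (T n) (T (S n)))
    by (intros n; exact (proj2_sig (constructive_indefinite_description _ (exists_heavy_quarter h (T n) Hh)))).
  set (vertex := fun n => fst (fst (T n))).
  assert (Hinv : forall n, let '(a', b', c') := T n in perimeter a' b' c' = L * (/2) ^ n /\
                   Cmod (triangle_int h a b c) <= 4 ^ n * Cmod (triangle_int h a' b' c')).
  { induction n as [|n IH]; [simpl; split; [unfold L; ring|lra]|].
    specialize (Hstep n). destruct (T n) as [[a' b'] c'], (T (S n)) as [[a'' b''] c''].
    destruct Hstep as (HP & _ & HI), IH as [IHP IHI]. split.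
    - rewrite HP, IHP. simpl. field.
    - pose proof (pow_lt 4 n ltac:(lra)). simpl. nra. }
  assert (Hmove : forall n, Cmod (Cminus (vertex (S n)) (vertex n)) <= L * (/2) ^ n).
  { intros n. specialize (Hstep n). specialize (Hinv n). unfold vertex.
    destruct (T n) as [[a' b'] c'], (T (S n)) as [[a'' b''] c''].
    destruct Hstep as (_ & HV & _), Hinv as [HP _]. simpl. lra. }
  destruct (geometric_cauchy_limit (fun n => Re (vertex n)) L) as [X HX].
  { intros n. eapply Rle_trans; [|apply (Hmove n)].
    eapply Rle_trans; [|apply re_le_Cmod]. simpl. unfold Re, Rminus; lra. }
  destruct (geometric_cauchy_limit (fun n => Im (vertex n)) L) as [Y HY].
  { intros n. eapply Rle_trans; [|apply (Hmove n)].
    eapply Rle_trans; [|apply Rabs_Im_le_Cmod]. simpl. unfold Im, Rminus; lra. }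
  exists (X, Y). intros n. specialize (Hinv n). specialize (HX n). specialize (HY n).
  unfold vertex in HX, HY. destruct (T n) as [[a' b'] c']. destruct Hinv as [HP HI].
  exists a', b', c'. repeat split; [exact HP| |exact HI].
  eapply Rle_trans; [apply Cmod_le_Rabs_Re_Im|].
  unfold Re, Im in *; simpl in *. unfold Rminus in *. lra.
Qed.

(* Near a point where [h] is differentiable, [h] differs from an affine map (whose triangle
   integral vanishes) by [o(w - z0)]. *)
Lemma triangle_int_near_derivative (h : C -> C) (z0 l : C) : Ccontinuous h ->
  is_Cderive h z0 l -> forall eps : posreal, exists del : posreal, forall a b c,
    Cmod (Cminus a z0) + perimeter a b c < del ->
    Cmod (triangle_int h a b c) <= perimeter a b c * (eps * (Cmod (Cminus a z0) + perimeter a b c)).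
Proof.
  intros Hh Hd eps. destruct (is_Cderive_elim h z0 l Hd eps) as [del Hdel].
  exists del. intros a b c Hsmall.
  set (c0 := Cminus (h z0) (Cmult z0 l)).
  set (r := fun w => Cplus (h w) (Cplus (Copp c0) (Cmult (Copp l) w))).
  assert (Hr : triangle_int h a b c = triangle_int r a b c).
  { rewrite (triangle_int_ext h (fun w => Cplus (r w) (Cplus c0 (Cmult l w)))) by (intros; unfold r; ring).
    rewrite triangle_int_plus, triangle_int_affine; [ring| |apply Ccontinuous_affine].
    apply Ccontinuous_plus; [exact Hh|apply Ccontinuous_affine]. }
  rewrite Hr. apply Cmod_triangle_int_le.
  { apply Ccontinuous_plus; [exact Hh|apply Ccontinuous_affine]. }
  intros w Hw.
  assert (Hwz : Cmod (Cminus w z0) <= Cmod (Cminus a z0) + perimeter a b c).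
  { replace (Cminus w z0) with (Cplus (Cminus w a) (Cminus a z0)) by ring.
    eapply Rle_trans; [apply Cmod_triangle|]. lra. }
  replace (r w) with (Cminus (Cminus (h w) (h z0)) (Cmult (Cminus w z0) l)) by (unfold r, c0; ring).
  eapply Rle_trans; [apply Hdel; lra|].
  apply Rmult_le_compat_l; [apply Rlt_le, cond_pos|exact Hwz].
Qed.

Lemma Cmod_le_eps_eq_0 (x : C) (K : R) : (forall eps, 0 < eps -> Cmod x <= eps * K) -> x = RtoC 0.
Proof.
  intros H. apply Cmod_eq_0, Rle_antisym; [|apply Cmod_ge_0].
  apply Rle_plus_epsilon. intros eps Heps. rewrite Rplus_0_l.
  destruct (Rle_dec K 0) as [HK|HK].
  - specialize (H eps Heps). nra.
  - apply Rnot_le_lt in HK.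
    assert (Hq : 0 < eps / K) by (apply Rdiv_lt_0_compat; lra). specialize (H _ Hq).
    replace (eps / K * K) with eps in H by (field; lra). exact H.
Qed.

Theorem goursat (h : C -> C) (a b c : C) : entire h -> triangle_int h a b c = RtoC 0.
Proof.
  intros He. pose proof (entire_Ccontinuous h He) as Hh.
  pose proof (perimeter_nonneg a b c) as HL. set (L := perimeter a b c) in HL |- *.
  destruct (nested_triangles h a b c Hh) as [z0 Hnest].
  destruct (He z0) as [l Hl].
  apply Cmod_le_eps_eq_0 with (5 * L ^ 2). intros eps Heps.
  destruct (triangle_int_near_derivative h z0 l Hh Hl (mkposreal eps Heps)) as [del Hdel].
  destruct (pow_half_lt (del / (5 * L + 1))) as [n Hn]; [apply Rdiv_lt_0_compat; [apply cond_pos|lra]|].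
  specialize (Hn n (le_n n)). pose proof (pow_lt (/2) n ltac:(lra)).
  assert (Hsmall : 5 * (L * (/2) ^ n) < del).
  { apply Rle_lt_trans with ((5 * L + 1) * (/2) ^ n); [nra|].
    apply Rmult_lt_reg_r with (/ (5 * L + 1)); [apply Rinv_0_lt_compat; lra|].
    replace ((5 * L + 1) * (/ 2) ^ n * / (5 * L + 1)) with ((/2) ^ n) by (field; lra). exact Hn. }
  destruct (Hnest n) as (a' & b' & c' & HP & HV & HI).
  specialize (Hdel a' b' c'). simpl in Hdel. fold L in HP, HV, HI.
  rewrite HP in Hdel. pose proof (Cmod_ge_0 (Cminus a' z0)).
  pose proof (Hdel ltac:(lra)) as HT. pose proof (pow_lt 4 n ltac:(lra)).
  assert (Hquarter : 4 ^ n * ((/2) ^ n * (/2) ^ n) = 1).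
  { rewrite <- !Rpow_mult_distr. replace (4 * (/2 * /2)) with 1 by field. apply pow1. }
  eapply Rle_trans; [exact HI|].
  apply Rle_trans with (4 ^ n * (L * (/2) ^ n * (eps * (5 * (L * (/2) ^ n))))).
  - apply Rmult_le_compat_l; [lra|]. eapply Rle_trans; [exact HT|].
    apply Rmult_le_compat_l; [nra|]. apply Rmult_le_compat_l; lra.
  - replace (4 ^ n * (L * (/2) ^ n * (eps * (5 * (L * (/2) ^ n)))))
      with ((4 ^ n * ((/2) ^ n * (/2) ^ n)) * (eps * (5 * L ^ 2))) by ring.
    rewrite Hquarter. lra.
Qed.

Lemma seg_int_segment_int (h : C -> C) (z : C) : Ccontinuous h ->
  seg_int h z = segment_int h (RtoC 0) z.
Proof.
  intros Hh. pose proof (is_CRInt_segment_mean h (RtoC 0) z Hh) as H.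
  assert (E : forall t, segment_fun h (RtoC 0) z t = h (Cmult (RtoC t) z))
    by (intros t; unfold segment_fun; f_equal; ring).
  unfold seg_int, segment_int. replace (Cminus z (RtoC 0)) with z by ring. f_equal.
  apply injective_projections; simpl; apply (is_RInt_unique (V:=R_CompleteNormedModule)).
  - eapply is_RInt_ext; [|exact (is_CRInt_fst _ _ _ _ H)]. intros t _. cbv beta. rewrite E. reflexivity.
  - eapply is_RInt_ext; [|exact (is_CRInt_snd _ _ _ _ H)]. intros t _. cbv beta. rewrite E. reflexivity.
Qed.

Lemma segment_int_increment (h : C -> C) (z y : C) : entire h ->
  Cminus (segment_int h (RtoC 0) y) (segment_int h (RtoC 0) z) = segment_int h z y.
Proof.
  intros He. pose proof (goursat h (RtoC 0) z y He) as G. unfold triangle_int in G.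
  rewrite (segment_int_rev h (RtoC 0) y (entire_Ccontinuous h He)) in G.
  replace (segment_int h z y)
    with (Cplus (Cplus (Cplus (segment_int h (RtoC 0) z) (segment_int h z y))
                       (Copp (segment_int h (RtoC 0) y)))
                (Cminus (segment_int h (RtoC 0) y) (segment_int h (RtoC 0) z))) by ring.
  rewrite G. ring.
Qed.

Lemma is_Cderive_segment_int (h : C -> C) (z : C) : entire h ->
  is_Cderive (fun y => segment_int h (RtoC 0) y) z (h z).
Proof.
  intros He. pose proof (entire_Ccontinuous h He) as Hh.
  apply is_Cderive_intro. intros eps.
  destruct (Hh z (eps / 2)) as [d [Hd Hd']]; [pose proof (cond_pos eps); lra|].
  exists (mkposreal d Hd). intros y Hy. simpl in Hy.
  rewrite segment_int_increment by exact He. unfold segment_int.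
  replace (Cminus (Cmult (Cminus y z) (segment_mean h z y)) (Cmult (Cminus y z) (h z)))
    with (Cmult (Cminus y z) (segment_mean (fun w => Cplus (h w) (Copp (h z))) z y))
    by (rewrite segment_mean_plus, segment_mean_const; [ring|exact Hh|apply Ccontinuous_const]).
  rewrite Cmod_mult, Rmult_comm. apply Rmult_le_compat_r; [apply Cmod_ge_0|].
  apply Rle_trans with (eps / 2); [|pose proof (cond_pos eps); lra].
  apply Cmod_segment_mean_le_sup; [apply Ccontinuous_plus; [exact Hh|apply Ccontinuous_const]|].
  intros t Ht. unfold segment_fun. left. apply Hd'.
  replace (Cminus (Cplus z (Cmult (RtoC t) (Cminus y z))) z) with (Cmult (RtoC t) (Cminus y z)) by ring.
  rewrite Cmod_mult, Cmod_R, Rabs_right by lra. pose proof (Cmod_ge_0 (Cminus y z)). nra.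
Qed.

Lemma entire_seg_int (h : C -> C) : entire h -> entire (seg_int h).
Proof.
  intros He z. exists (h z).
  apply is_Cderive_ext with (fun y => segment_int h (RtoC 0) y).
  - intros w. symmetry. apply seg_int_segment_int, entire_Ccontinuous, He.
  - apply is_Cderive_segment_int, He.
Qed.

(** * The Fock-type norm *)

Lemma fock_weight_nonneg (alpha : R) (m : nat) (f : C -> C) (z : C) : 0 <= fock_weight alpha m f z.
Proof.
  unfold fock_weight. pose proof (exp_pos (- alpha * Cmod z ^ m)). pose proof (Cmod_ge_0 (f z)).
  nra.
Qed.

Lemma Lub_Rbar_finite_bounds (E : R -> Prop) (M x0 : R) : E x0 -> (forall x, E x -> x <= M) ->
  (forall x, E x -> x <= real (Lub_Rbar E)) /\
  (forall B, (forall x, E x -> x <= B) -> real (Lub_Rbar E) <= B).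
Proof.
  intros H0 HM. destruct (Lub_Rbar_correct E) as [Hub Hl].
  destruct (Lub_Rbar E) as [l| |] eqn:EL.
  - split; [exact Hub|]. intros B HB. apply (Hl (Finite B)). exact HB.
  - exfalso. apply (Hl (Finite M)). exact HM.
  - exfalso. exact (Hub x0 H0).
Qed.

Lemma Cmod_RtoC_1_pos : 0 < Cmod (RtoC 1).
Proof. rewrite Cmod_1. lra. Qed.

Lemma fock_norm_le (alpha : R) (m : nat) (g : C -> C) (B : R) :
  (forall z, 0 < Cmod z -> fock_weight alpha m g z <= B) -> fock_norm alpha m g <= B.
Proof.
  intros HB.
  destruct (Lub_Rbar_finite_bounds (fun x => exists z : C, 0 < Cmod z /\ x = fock_weight alpha m g z)
              B (fock_weight alpha m g (RtoC 1))) as [_ Hle].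
  - exists (RtoC 1). split; [apply Cmod_RtoC_1_pos|reflexivity].
  - intros x [z [Hz ->]]. apply HB, Hz.
  - apply Hle. intros x [z [Hz ->]]. apply HB, Hz.
Qed.

Lemma fock_weight_le_fock_norm (alpha : R) (m : nat) (f : C -> C) : in_fock alpha m f ->
  forall z, 0 < Cmod z -> fock_weight alpha m f z <= fock_norm alpha m f.
Proof.
  intros [_ [M HM]] z Hz.
  destruct (Lub_Rbar_finite_bounds (fun x => exists z : C, 0 < Cmod z /\ x = fock_weight alpha m f z)
              M (fock_weight alpha m f (RtoC 1))) as [Hub _].
  - exists (RtoC 1). split; [apply Cmod_RtoC_1_pos|reflexivity].
  - intros x [w [Hw ->]]. apply HM, Hw.
  - apply Hub. exists z. split; [exact Hz|reflexivity].
Qed.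

Lemma fock_norm_nonneg (alpha : R) (m : nat) (f : C -> C) : in_fock alpha m f ->
  0 <= fock_norm alpha m f.
Proof.
  intros Hf. eapply Rle_trans; [apply (fock_weight_nonneg alpha m f (RtoC 1))|].
  apply fock_weight_le_fock_norm; [exact Hf|apply Cmod_RtoC_1_pos].
Qed.

Lemma Cmod_le_fock_growth (alpha : R) (m : nat) (f : C -> C) (N : R) (w : C) :
  (forall z, 0 < Cmod z -> fock_weight alpha m f z <= N) -> 0 < Cmod w ->
  Cmod (f w) <= N * exp (alpha * Cmod w ^ m).
Proof.
  intros H Hw. specialize (H w Hw). unfold fock_weight in H.
  replace (Cmod (f w)) with (exp (alpha * Cmod w ^ m) * (exp (- alpha * Cmod w ^ m) * Cmod (f w))).
  - pose proof (exp_pos (alpha * Cmod w ^ m)). nra.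
  - rewrite <- Rmult_assoc, <- exp_plus.
    replace (alpha * Cmod w ^ m + - alpha * Cmod w ^ m) with 0 by ring. rewrite exp_0. ring.
Qed.

(** * Boundedness of [K_lambda] *)

(* [t |-> e^(-b (1 - t^m)) / (b m)] is a primitive of the integrand. *)
Lemma is_RInt_radial_profile (m : nat) (b : R) : (1 <= m)%nat -> 0 < b ->
  is_RInt (fun t => t ^ (m - 1) * exp (- b * (1 - t ^ m))) 0 1 ((1 - exp (- b)) / (b * INR m)).
Proof.
  intros Hm Hb. assert (HmR : 0 < INR m) by (apply lt_0_INR; lia).
  set (F := fun t => exp (- b * (1 - t ^ m)) / (b * INR m)).
  replace ((1 - exp (- b)) / (b * INR m)) with (minus (F 1) (F 0)).
  2:{ unfold F, minus, plus, opp; simpl. rewrite pow1, pow_i by lia.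
      replace (- b * (1 - 1)) with 0 by ring. rewrite exp_0.
      replace (- b * (1 - 0)) with (- b) by ring. field. lra. }
  apply (is_RInt_derive (V:=R_CompleteNormedModule) F); unfold F.
  - intros x _. auto_derive; [lra|].
    replace (Init.Nat.pred m) with (m - 1)%nat by lia. unfold Rminus. field. lra.
  - intros x _. apply (ex_derive_continuous (K:=R_AbsRing) (V:=R_NormedModule)). auto_derive. lra.
Qed.

Definition K_integrand (lambda : C) (m : nat) (f : C -> C) (w : C) : C :=
  Cmult (Cexp (Copp (Cmult lambda (Cpow w m)))) (Cmult (Cpow w (m - 1)) (f w)).

Lemma entire_K_integrand (lambda : C) (m : nat) (f : C -> C) :
  entire f -> entire (K_integrand lambda m f).
Proof.
  intros Hf. unfold K_integrand. apply entire_mult; [|apply entire_mult; [apply entire_pow|exact Hf]].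
  apply (entire_ext (fun w => Cexp (Cmult (Copp lambda) (Cpow w m))));
    [intros w; f_equal; ring|apply entire_Cexp_monomial].
Qed.

Lemma K_op_eq (a lambda : C) (m : nat) (f : C -> C) (z : C) : entire f ->
  K_op a lambda m f z
  = Cmult (Cmult a (RtoC (INR m)))
      (Cmult (Cexp (Cmult lambda (Cpow z m)))
         (Cmult z (segment_mean (K_integrand lambda m f) (RtoC 0) z))).
Proof.
  intros Hf. unfold K_op. fold (K_integrand lambda m f).
  rewrite seg_int_segment_int by apply entire_Ccontinuous, entire_K_integrand, Hf.
  unfold segment_int. do 3 f_equal. ring.
Qed.

Lemma entire_K_op (a lambda : C) (m : nat) (f : C -> C) : entire f -> entire (K_op a lambda m f).
Proof.
  intros Hf. unfold K_op.
  apply entire_mult; [apply entire_const|apply entire_mult; [apply entire_Cexp_monomial|]].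
  apply entire_seg_int, entire_K_integrand, Hf.
Qed.

(* Along the ray [t z], the growth bound on [f] combines with [|e^(-lambda w^m)|] into
   the profile of [is_RInt_radial_profile], with [b = (alpha - |lambda|) |z|^m]. *)
Lemma Cmod_K_integrand_ray_le (alpha : R) (m : nat) (lambda : C) (f : C -> C) (N : R) (z : C) (t : R) :
  Cmod lambda < alpha -> (forall w, 0 < Cmod w -> fock_weight alpha m f w <= N) -> 0 <= N ->
  0 < Cmod z -> 0 < t < 1 ->
  Cmod (K_integrand lambda m f (Cmult (RtoC t) z)) <=
  N * exp (alpha * Cmod z ^ m - Re (Cmult lambda (Cpow z m))) * Cmod z ^ (m - 1) *
    (t ^ (m - 1) * exp (- ((alpha - Cmod lambda) * Cmod z ^ m) * (1 - t ^ m))).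
Proof.
  intros Hl HN HN0 Hz Ht.
  set (r := Cmod z) in Hz |- *. set (u := Re (Cmult lambda (Cpow z m))).
  assert (Hw : Cmod (Cmult (RtoC t) z) = t * r)
    by (rewrite Cmod_mult, Cmod_R, Rabs_right by lra; reflexivity).
  assert (Hf : Cmod (f (Cmult (RtoC t) z)) <= N * exp (alpha * (t ^ m * r ^ m))).
  { rewrite <- Rpow_mult_distr, <- Hw. apply Cmod_le_fock_growth; [exact HN|].
    rewrite Hw. nra. }
  assert (Hre : Re (Copp (Cmult lambda (Cpow (Cmult (RtoC t) z) m))) = - (t ^ m * u)).
  { rewrite Cpow_mult_l, <- RtoC_pow. unfold u. destruct lambda as [l1 l2].
    destruct (Cpow z m) as [p1 p2]. simpl. ring. }
  assert (Hu : u <= Cmod lambda * r ^ m).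
  { unfold u, r. eapply Rle_trans; [apply Rle_abs|]. eapply Rle_trans; [apply re_le_Cmod|].
    rewrite Cmod_mult, Cmod_pow. lra. }
  assert (Htm : t ^ m <= 1) by (rewrite <- (pow1 m); apply pow_incr; lra).
  assert (Htm0 : 0 <= t ^ m) by (apply pow_le; lra).
  assert (Hexp : exp (- (t ^ m * u)) * exp (alpha * (t ^ m * r ^ m)) <=
                 exp (alpha * r ^ m - u) * exp (- ((alpha - Cmod lambda) * r ^ m) * (1 - t ^ m))).
  { rewrite <- !exp_plus. apply exp_le_mono.
    assert (0 <= (1 - t ^ m) * (Cmod lambda * r ^ m - u)) by (apply Rmult_le_pos; lra). nra. }
  assert (Hp : 0 <= t ^ (m - 1) * r ^ (m - 1)) by (apply Rmult_le_pos; apply pow_le; lra).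
  unfold K_integrand. rewrite !Cmod_mult, Cmod_Cexp, Hre, Cmod_pow, Hw, Rpow_mult_distr.
  pose proof (exp_pos (- (t ^ m * u))).
  apply Rle_trans with
    (exp (- (t ^ m * u)) * (t ^ (m - 1) * r ^ (m - 1) * (N * exp (alpha * (t ^ m * r ^ m))))).
  - apply Rmult_le_compat_l; [lra|]. apply Rmult_le_compat_l; [exact Hp|exact Hf].
  - replace (exp (- (t ^ m * u)) * (t ^ (m - 1) * r ^ (m - 1) * (N * exp (alpha * (t ^ m * r ^ m)))))
      with ((t ^ (m - 1) * r ^ (m - 1) * N) * (exp (- (t ^ m * u)) * exp (alpha * (t ^ m * r ^ m))))
      by ring.
    replace (N * exp (alpha * r ^ m - u) * r ^ (m - 1) *
               (t ^ (m - 1) * exp (- ((alpha - Cmod lambda) * r ^ m) * (1 - t ^ m))))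
      with ((t ^ (m - 1) * r ^ (m - 1) * N) *
            (exp (alpha * r ^ m - u) * exp (- ((alpha - Cmod lambda) * r ^ m) * (1 - t ^ m))))
      by ring.
    apply Rmult_le_compat_l; [apply Rmult_le_pos; lra|exact Hexp].
Qed.

Lemma Cmod_K_mean_le (alpha : R) (m : nat) (lambda : C) (f : C -> C) (N : R) (z : C) :
  (1 <= m)%nat -> Cmod lambda < alpha -> entire f ->
  (forall w, 0 < Cmod w -> fock_weight alpha m f w <= N) -> 0 <= N -> 0 < Cmod z ->
  let b := (alpha - Cmod lambda) * Cmod z ^ m in
  Cmod (segment_mean (K_integrand lambda m f) (RtoC 0) z) <=
  N * exp (alpha * Cmod z ^ m - Re (Cmult lambda (Cpow z m))) * Cmod z ^ (m - 1) *
    ((1 - exp (- b)) / (b * INR m)).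
Proof.
  intros Hm Hl Hf HN HN0 Hz b.
  assert (Hb : 0 < b) by (apply Rmult_lt_0_compat; [lra|apply pow_lt, Hz]).
  set (K0 := N * exp (alpha * Cmod z ^ m - Re (Cmult lambda (Cpow z m))) * Cmod z ^ (m - 1)).
  pose proof (entire_Ccontinuous _ (entire_K_integrand lambda m f Hf)) as Hc.
  pose proof (is_RInt_scal _ _ _ K0 _ (is_RInt_radial_profile m b Hm Hb)) as HI.
  eapply Rle_trans; [apply Cmod_segment_mean_le, Hc|].
  replace (K0 * ((1 - exp (- b)) / (b * INR m)))
    with (RInt (fun t => scal K0 (t ^ (m - 1) * exp (- b * (1 - t ^ m)))) 0 1)
    by (apply (is_RInt_unique (V:=R_CompleteNormedModule)), HI).
  apply RInt_le; [lra|apply ex_RInt_Cmod_segment_fun, Hc|eexists; exact HI|].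
  intros t Ht. unfold segment_fun.
  replace (Cplus (RtoC 0) (Cmult (RtoC t) (Cminus z (RtoC 0)))) with (Cmult (RtoC t) z) by ring.
  exact (Cmod_K_integrand_ray_le alpha m lambda f N z t Hl HN HN0 Hz Ht).
Qed.

Lemma fock_weight_K_op_le (alpha : R) (m : nat) (a lambda : C) (f : C -> C) (N : R) (z : C) :
  (1 <= m)%nat -> Cmod lambda < alpha -> entire f ->
  (forall w, 0 < Cmod w -> fock_weight alpha m f w <= N) -> 0 <= N -> 0 < Cmod z ->
  fock_weight alpha m (K_op a lambda m f) z <= Cmod a / (alpha - Cmod lambda) * N.
Proof.
  intros Hm Hl Hf HN HN0 Hz.
  pose proof (Cmod_K_mean_le alpha m lambda f N z Hm Hl Hf HN HN0 Hz) as HJ. cbv zeta in HJ.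
  assert (HmR : 0 < INR m) by (apply lt_0_INR; lia).
  set (r := Cmod z) in Hz, HJ |- *. set (u := Re (Cmult lambda (Cpow z m))) in HJ |- *.
  set (J := segment_mean (K_integrand lambda m f) (RtoC 0) z) in HJ.
  set (b := (alpha - Cmod lambda) * r ^ m) in HJ.
  assert (Hb : 0 < b) by (apply Rmult_lt_0_compat; [lra|apply pow_lt, Hz]).
  assert (Hrm : r * r ^ (m - 1) = r ^ m)
    by (destruct m as [|k]; [lia|replace (S k - 1)%nat with k by lia; reflexivity]).
  pose proof (Cmod_ge_0 a). pose proof (Cmod_ge_0 J). pose proof (exp_pos (- b)).
  pose proof (exp_pos u). pose proof (exp_pos (- alpha * r ^ m)).
  unfold fock_weight. rewrite K_op_eq by exact Hf.
  rewrite !Cmod_mult, Cmod_R, Rabs_right, Cmod_Cexp by lra. fold u r J.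
  (* the exponentials cancel: [e^(-alpha r^m) e^u e^(alpha r^m - u) = 1] *)
  apply Rle_trans with (Cmod a * N * ((1 - exp (- b)) / (alpha - Cmod lambda))).
  - apply Rle_trans with
      (exp (- alpha * r ^ m) * (Cmod a * INR m * (exp u * (r *
         (N * exp (alpha * r ^ m - u) * r ^ (m - 1) * ((1 - exp (- b)) / (b * INR m))))))).
    + apply Rmult_le_compat_l; [lra|]. apply Rmult_le_compat_l; [nra|].
      apply Rmult_le_compat_l; [lra|]. apply Rmult_le_compat_l; [lra|exact HJ].
    + right. assert (0 < r ^ (m - 1)) by (apply pow_lt, Hz).
      replace (exp (alpha * r ^ m - u)) with (/ (exp (- alpha * r ^ m) * exp u))
        by (rewrite <- exp_plus, <- exp_Ropp; f_equal; ring).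
      unfold b. rewrite <- Hrm. field. repeat split; apply Rgt_not_eq; try lra; apply exp_pos.
  - assert (0 < / (alpha - Cmod lambda)) by (apply Rinv_0_lt_compat; lra).
    unfold Rdiv. replace (Cmod a * / (alpha - Cmod lambda) * N)
      with (Cmod a * N * (1 * / (alpha - Cmod lambda))) by ring.
    apply Rmult_le_compat_l; [nra|]. apply Rmult_le_compat_r; lra.
Qed.

Lemma K_op_bounded (alpha : R) (m : nat) (a lambda : C) : (1 <= m)%nat -> Cmod lambda < alpha ->
  fock_bounded_by alpha m (K_op a lambda m) (Cmod a / (alpha - Cmod lambda)).
Proof.
  intros Hm Hl f Hf.
  assert (HK : forall z, 0 < Cmod z -> fock_weight alpha m (K_op a lambda m f) z
                 <= Cmod a / (alpha - Cmod lambda) * fock_norm alpha m f).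
  { intros z Hz. apply fock_weight_K_op_le; auto.
    - exact (proj1 Hf).
    - apply fock_weight_le_fock_norm, Hf.
    - apply fock_norm_nonneg, Hf. }
  split; [split; [apply entire_K_op, (proj1 Hf)|eexists; exact HK]|].
  apply fock_norm_le, HK.
Qed.

Lemma Cderiv_monomial (c : C) (m : nat) (w : C) :
  Cderiv (fun z => Cmult c (Cpow z m)) w = Cmult c (Cmult (RtoC (INR m)) (Cpow w (m - 1))).
Proof.
  assert (Hd : is_Cderive (fun z => Cmult c (Cpow z m)) w
                 (Cmult c (Cmult (RtoC (INR m)) (Cpow w (m - 1))))).
  { eapply is_Cderive_eq;
      [|apply (is_Cderive_mult (fun _ => c) (fun z => Cpow z m));
        [apply is_Cderive_const|apply is_Cderive_pow]].
    ring. }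
  unfold Cderiv.
  pose proof (epsilon_spec (inhabits (RtoC 0))
    (fun l : C => is_Cderive (fun z => Cmult c (Cpow z m)) w l) (ex_intro _ _ Hd)) as He.
  apply is_C_derive_unique in Hd. apply is_C_derive_unique in He.
  etransitivity; [symmetry; exact He|exact Hd].
Qed.

Lemma V_monomial_eq_K_op (c : C) (m : nat) (f : C -> C) : entire f ->
  V_op (fun z => Cmult c (Cpow z m)) f = K_op c (RtoC 0) m f.
Proof.
  intros Hf. apply functional_extensionality. intros z.
  set (F := fun w => Cmult (Cpow w (m - 1)) (f w)).
  assert (HF : Ccontinuous F) by (apply entire_Ccontinuous, entire_mult; [apply entire_pow|exact Hf]).
  set (k := Cmult c (RtoC (INR m))).
  transitivity (seg_int (fun w => Cmult k (F w)) z).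
  { unfold V_op. f_equal. apply functional_extensionality. intros w.
    rewrite Cderiv_monomial. unfold k, F. ring. }
  transitivity (Cmult k (seg_int F z)).
  { rewrite !seg_int_segment_int by (try apply Ccontinuous_scal; exact HF).
    unfold segment_int. rewrite segment_mean_scal by exact HF. ring. }
  unfold K_op. fold k.
  replace (Cmult (RtoC 0) (Cpow z m)) with (RtoC 0) by ring. rewrite Cexp_0.
  replace (fun w => Cmult (Cexp (Copp (Cmult (RtoC 0) (Cpow w m)))) (Cmult (Cpow w (m - 1)) (f w)))
    with F; [ring|].
  apply functional_extensionality. intros w.
  replace (Copp (Cmult (RtoC 0) (Cpow w m))) with (RtoC 0) by ring. rewrite Cexp_0. unfold F. ring.
Qed.

Theorem lemma2 (m : nat) (alpha : R) (Hm : (1 <= m)%nat) (Halpha : 0 < alpha) :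
  (forall a lambda : C, Cmod lambda < alpha ->
     fock_bounded_by alpha m (K_op a lambda m) (Cmod a / (alpha - Cmod lambda)))
  /\
  (forall a_m : C,
     fock_bounded_by alpha m (V_op (fun z => Cmult a_m (Cpow z m))) (Cmod a_m / alpha)).
Proof.
  split.
  - intros a lambda Hl. exact (K_op_bounded alpha m a lambda Hm Hl).
  - intros a_m f Hf. rewrite V_monomial_eq_K_op by exact (proj1 Hf).
    assert (H0 : Cmod (RtoC 0) < alpha) by (rewrite Cmod_0; exact Halpha).
    pose proof (K_op_bounded alpha m a_m (RtoC 0) Hm H0 f Hf) as H.
    rewrite Cmod_0, Rminus_0_r in H. exact H.
Qed.
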